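(* Let $\mathbb{F}_q$ be a finite field with $\mathrm{char}(\mathbb{F}_q)>3$ and $3\mid q-1$, and let $z\in\mathbb{F}_q^\times$ be a non-cube. Then $\mathfrak{sl}_3(\mathbb{F}_q)$ has exactly two $J_3$-decompositions up to conjugacy, represented by $J_3(1,1)$ and $J_3(1,z)$. More precisely: $J_3(1,z^2)$ is conjugate to $J_3(1,z)$, $J_3(1,z)$ is not conjugate to $J_3(1,1)$, and every $J_3(a,b)$ with $a,b\in\mathbb{F}_q^\times$ is conjugate to one of $J_3(1,1)$, $J_3(1,z)$.
   Context: $\mathfrak{sl}_3(\mathbb{F}_q)$ is the Lie algebra of $3\times3$ traceless matrices over $\mathbb{F}_q$. Fix a primitive cube root of unity $u\in\mathbb{F}_q$. For nonzero $a,b\in\mathbb{F}_q$, $J_3(a,b)$ denotes the decomposition $\mathfrak{sl}_3(\mathbb{F}_q)=H_0\oplus H_1\oplus H_2\oplus H_3$, where $H_0$ is the subalgebra of traceless diagonal matrices and, for $j=1,2,3$ with $(\lambda_j,\mu_j)=(1,1),(u,u^2),(u^2,u)$ respectively, $H_j=\left\langle \begin{pmatrix}0&1&0\\0&0&\lambda_j a\\ \mu_j ab&0&0\end{pmatrix},\begin{pmatrix}0&0&1\\ \mu_j ab&0&0\\0&\lambda_j b&0\end{pmatrix}\right\rangle_{\mathbb{F}_q}$. A $J_3$-decomposition is any decomposition $J_3(a,b)$ with $a,b\in\mathbb{F}_q^\times$. Two such decompositions are conjugate if there is a Lie algebra automorphism of $\mathfrak{sl}_3(\mathbb{F}_q)$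 mapping each component of the first onto exactly one component of the second. *)

From HB Require Import structures.
From mathcomp Require Import all_boot all_order all_algebra all_fingroup all_field.
Set Implicit Arguments. Unset Strict Implicit. Unset Printing Implicit Defensive.
Import GRing.Theory.
Local Open Scope ring_scope.

Section J3.
Variable F : finFieldType.

Definition mx3 (a b c d e f g h k : F) : 'M[F]_3 :=
  \matrix_(i < 3, j < 3)
    nth 0 (nth [::] [:: [:: a; b; c]; [:: d; e; f]; [:: g; h; k]] i) j.

Definition sl3 : {set 'M[F]_3} := [set M | \tr M == 0].

Definition lie (A B : 'M[F]_3) : 'M[F]_3 := A *m B - B *m A.

Definition span2 (A B : 'M[F]_3) : {set 'M[F]_3} :=
  [set x *: A + y *: B | x : F, y : F].

Definition H0 : {set 'M[F]_3} := [set M | is_diag_mx M && (\tr M == 0)].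

Definition Hj (a b l m : F) : {set 'M[F]_3} :=
  span2 (mx3 0 1 0  0 0 (l * a)  (m * a * b) 0 0)
        (mx3 0 0 1  (m * a * b) 0 0  0 (l * b) 0).

Definition J3 (u a b : F) (i : 'I_4) : {set 'M[F]_3} :=
  match val i with
  | 0 => H0
  | 1 => Hj a b 1 1
  | 2 => Hj a b u (u ^+ 2)
  | _ => Hj a b (u ^+ 2) u
  end.

(* Lie algebra automorphism of sl_3(F): an F-linear map which maps sl_3
   bijectively onto sl_3 and preserves the bracket on sl_3.  (Only its
   restriction to sl_3 matters.) *)
Definition lie_aut (phi : 'M[F]_3 -> 'M[F]_3) : Prop :=
  [/\ forall (c : F) (A B : 'M[F]_3), phi (c *: A + B) = c *: phi A + phi B,
      {in sl3 &, injective phi},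
      phi @: sl3 = sl3
    & forall A B, A \in sl3 -> B \in sl3 -> phi (lie A B) = lie (phi A) (phi B)].

Definition conj_dec (D1 D2 : 'I_4 -> {set 'M[F]_3}) : Prop :=
  exists phi, lie_aut phi /\
    exists sigma : 'I_4 -> 'I_4, forall i, phi @: D1 i = D2 (sigma i).

End J3.

From HB Require Import structures.
From mathcomp Require Import all_boot all_order all_algebra all_fingroup all_field.
From mathcomp Require Import cyclic ring.
Set Implicit Arguments. Unset Strict Implicit. Unset Printing Implicit Defensive.
Import GRing.Theory.
Local Open Scope ring_scope.

(* Conjugating by a diagonal matrix diag(1, d, e) turns J_3(a, b) into
   J_3(a d^2 / e, b e^2 / d), and the permutation matrix exchanging the last two
   basis vectors turns J_3(a, b) into J_3(b, a).  As z generates F^x / (F^x)^3,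
   this brings every J_3(a, b) to some J_3(1, z^j) with j < 3, and J_3(1, z^2)
   to J_3(1, z).

   Every component of J_3(1, 1) contains an element h such that ad h has the
   eigenvalue 1 on sl_3, and this property is transported by automorphisms.  The
   component H_1 of J_3(1, z) is spanned by X and X^2 where X^3 = z, so F[X] is
   a field.  If [h, C] = C with h in F[X], split C along the eigenvalues (the
   cube roots of unity, 3 being invertible) of conjugation by X: a component P
   with X P = w P X satisfies P f(X) = 0 for a nonzero f of degree at most 2,
   and f(X) is invertible, so P = 0 and C = 0. *)

Lemma prim_root3_sum (R : idomainType) (u : R) : 3.-primitive_root u -> 1 + u + u ^+ 2 = 0.
Proof.
move=> u_prim; have u3 := prim_expr_order u_prim.
have u_neq1 : u - 1 != 0 by rewrite subr_eq0 -(expr1 u) -(prim_order_dvd u_prim).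
by apply: (mulfI u_neq1); rewrite mulr0; ring: u3.
Qed.

Section CubeRootsOfIdentity.
Variables (R : fieldType) (V : lmodType R) (T : {linear V -> V}).
Hypothesis T3 : forall A, T (T (T A)) = A.

(* Three times the projection of [A] on the [w]-eigenspace of [T]. *)
Definition cube_eigencomp (w : R) (A : V) := A + w ^+ 2 *: T A + w *: T (T A).

Lemma cube_eigencompE w A : w ^+ 3 = 1 -> T (cube_eigencomp w A) = w *: cube_eigencomp w A.
Proof.
move=> w3; rewrite /cube_eigencomp !linearD !linearZ /= T3.
by rewrite !scalerA -expr2 -exprSr w3 scale1r addrC addrA.
Qed.

Lemma sum_cube_eigencomp u A : 3.-primitive_root u ->
  cube_eigencomp 1 A + cube_eigencomp u A + cube_eigencomp (u ^+ 2) A = 3%:R *: A.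
Proof.
move=> u_prim; have u3 := prim_expr_order u_prim; have usum := prim_root3_sum u_prim.
rewrite /cube_eigencomp (AC (3*3*3) ((1*4*7)*(2*5*8)*(3*6*9))) /= -!scalerDl.
rewrite (_ : 1 ^+ 2 + u ^+ 2 + u ^+ 2 ^+ 2 = 0); last by rewrite -usum; ring: u3.
by rewrite usum !scale0r !addr0 scaler_nat mulrS mulr2n addrA.
Qed.
End CubeRootsOfIdentity.

Lemma mod3_solve (i e : nat) : ~~ (3 %| e)%N -> exists2 j, (j < 3)%N & (3 %| i + e * j)%N.
Proof.
rewrite /dvdn => e_mod.
suff [j j_lt3 j_mod] : exists2 j, (j < 3)%N & ((i %% 3 + (e %% 3) * j) %% 3 == 0)%N.
  by exists j; rewrite // -modnDml -modnDmr -modnMml modnDmr.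
move: (ltn_pmod i (isT : 0 < 3)%N) (ltn_pmod e (isT : 0 < 3)%N) e_mod.
case: (i %% 3)%N => [|[|[|?]]] // _; case: (e %% 3)%N => [|[|[|?]]] // _ _;
  by [exists 0%N | exists 1%N | exists 2%N].
Qed.

Section FiniteFieldUnits.
Variable F : finFieldType.

Lemma expf_card_pred (x : F) : x != 0 -> x ^+ #|F|.-1 = 1.
Proof.
move=> x_neq0; apply: (mulfI x_neq0); rewrite mulr1 -exprS prednK ?expf_card //.
by apply/card_gt0P; exists 0.
Qed.

Lemma finField_prim_root : exists g : F, #|F|.-1.-primitive_root g.
Proof.
have: has #|F|.-1.-primitive_root (enum (predC1 (0 : F))).
  apply: has_prim_root; last by rewrite -cardE cardC1.
  - by rewrite -(cardC1 0); apply/card_gt0P; exists 1; rewrite !inE oner_eq0.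
  - by apply/allP => x; rewrite mem_enum !inE unity_rootE => /expf_card_pred ->.
  - exact: enum_uniq.
by case/hasP => g _; exists g.
Qed.

End FiniteFieldUnits.

Ltac mx3_entries := apply/matrixP; case=> [[|[|[|?]]] ?] //; case=> [[|[|[|?]]] ?] //;
  rewrite !mxE ?big_ord_recl ?big_ord0 ?mxE /=.

Section Mx3Calculus.
Variable F : finFieldType.
Implicit Types a b c d e f g h k : F.
Local Notation i1 := (@Ordinal 3 1 isT).
Local Notation i2 := (@Ordinal 3 2 isT).

Lemma mx3_mul a b c d e f g h k a' b' c' d' e' f' g' h' k' :
  mx3 a b c d e f g h k *m mx3 a' b' c' d' e' f' g' h' k' =
  mx3 (a*a'+b*d'+c*g') (a*b'+b*e'+c*h') (a*c'+b*f'+c*k')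
      (d*a'+e*d'+f*g') (d*b'+e*e'+f*h') (d*c'+e*f'+f*k')
      (g*a'+h*d'+k*g') (g*b'+h*e'+k*h') (g*c'+h*f'+k*k').
Proof. mx3_entries; ring. Qed.

Lemma mx3_add a b c d e f g h k a' b' c' d' e' f' g' h' k' :
  mx3 a b c d e f g h k + mx3 a' b' c' d' e' f' g' h' k' =
  mx3 (a+a') (b+b') (c+c') (d+d') (e+e') (f+f') (g+g') (h+h') (k+k').
Proof. by mx3_entries. Qed.

Lemma mx3_scale x a b c d e f g h k :
  x *: mx3 a b c d e f g h k =
  mx3 (x*a) (x*b) (x*c) (x*d) (x*e) (x*f) (x*g) (x*h) (x*k).
Proof. by mx3_entries. Qed.

Lemma mx3_opp a b c d e f g h k :
  - mx3 a b c d e f g h k = mx3 (-a) (-b) (-c) (-d) (-e) (-f) (-g) (-h) (-k).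
Proof. by mx3_entries. Qed.

Lemma mx3_1 : (1%:M : 'M[F]_3) = mx3 1 0 0 0 1 0 0 0 1.
Proof. by mx3_entries. Qed.

Lemma mx3_trace a b c d e f g h k : \tr (mx3 a b c d e f g h k) = a + e + k.
Proof. by rewrite /mxtrace !big_ord_recl big_ord0 !mxE /= addr0 addrA. Qed.

Lemma mx3E (M : 'M[F]_3) : M = mx3 (M ord0 ord0) (M ord0 i1) (M ord0 i2)
  (M i1 ord0) (M i1 i1) (M i1 i2)
  (M i2 ord0) (M i2 i1) (M i2 i2).
Proof.
apply/matrixP => i j; rewrite !mxE.
by case: i => [[|[|[|i]]] Hi] //; case: j => [[|[|[|j]]] Hj] //=; congr (M _ _);
  exact: val_inj.
Qed.

Lemma mx3_diag a b c d e f g h k : is_diag_mx (mx3 a b c d e f g h k) =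
  [&& b == 0, c == 0, d == 0, f == 0, g == 0 & h == 0].
Proof.
apply/is_diag_mxP/idP => [D|].
  have := D ord0 i1; have := D ord0 i2; have := D i1 ord0.
  have := D i1 i2; have := D i2 ord0; have := D i2 i1.
  by rewrite !mxE /= => -> // -> // -> // -> // -> // -> //; rewrite !eqxx.
case/and5P => /eqP-> /eqP-> /eqP-> /eqP-> /andP[/eqP-> /eqP->].
by case=> [[|[|[|i]]] Hi] //; case=> [[|[|[|j]]] Hj] //= _; rewrite mxE.
Qed.

Lemma mx3_neq0 a b c d e f g h k : a != 0 -> mx3 a b c d e f g h k != 0.
Proof.
by move=> a0; apply: contra a0 => /eqP/matrixP/(_ ord0 ord0); rewrite !mxE /= => ->.
Qed.

End Mx3Calculus.

Ltac mx3_simpl := rewrite ?(mx3_mul, mx3_add, mx3_scale, mx3_opp); congr mx3.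

Section LieBracket.
Variable F : finFieldType.

Lemma lieDr (h A B : 'M[F]_3) : lie h (A + B) = lie h A + lie h B.
Proof. by rewrite /lie mulmxDr mulmxDl opprD addrACA. Qed.

Lemma lieZr (h A : 'M[F]_3) c : lie h (c *: A) = c *: lie h A.
Proof. by rewrite /lie -scalemxAr -scalemxAl scalerBr. Qed.

Lemma lie_mxconj (h g g' A : 'M[F]_3) : g *m h = h *m g -> g' *m h = h *m g' ->
  lie h (g *m A *m g') = g *m lie h A *m g'.
Proof.
by move=> gh g'h; rewrite /lie mulmxBr mulmxBl !mulmxA -gh -!mulmxA g'h.
Qed.

Lemma lie_twisted (X P : 'M[F]_3) (x y w : F) : X *m P = w *: (P *m X) ->
  lie (x *: X + y *: X ^+ 2) P = P *m ((x * (w - 1)) *: X + (y * (w ^+ 2 - 1)) *: X ^+ 2).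
Proof.
move=> XP; have X2P : X ^+ 2 *m P = w ^+ 2 *: (P *m X ^+ 2).
  by rewrite -mulmxA XP -scalemxAr mulmxA XP -scalemxAl scalerA -expr2 -mulmxA.
rewrite /lie mulmxDl mulmxDr -!scalemxAl -!scalemxAr XP X2P !scalerA.
by rewrite !mulrBr !mulr1 !scalerBl mulmxDr !mulmxBr -!scalemxAr opprD addrACA.
Qed.

End LieBracket.

Section LieAutomorphisms.
Variable F : finFieldType.

Definition mxconj (g g' M : 'M[F]_3) := g *m M *m g'.

Lemma mxconj_lie_aut (g g' : 'M[F]_3) :
  g *m g' = 1%:M -> g' *m g = 1%:M -> lie_aut (mxconj g g').
Proof.
move=> gg' g'g; split.
- by move=> c A B; rewrite /mxconj mulmxDr mulmxDl -scalemxAr -scalemxAl.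
- move=> A B _ _ /(congr1 (mxconj g' g)).
  by rewrite /mxconj !mulmxA g'g !mul1mx -!mulmxA g'g !mulmx1.
- apply/setP => M; rewrite inE; apply/imsetP/idP => [[A]|trM].
    by rewrite inE /mxconj => trA ->; rewrite mxtrace_mulC mulmxA g'g mul1mx.
  exists (mxconj g' g M); last by rewrite /mxconj !mulmxA gg' mul1mx -mulmxA gg' mulmx1.
  by rewrite inE /mxconj mxtrace_mulC mulmxA gg' mul1mx.
- move=> A B _ _; rewrite /lie /mxconj mulmxBr mulmxBl.
  by congr (_ - _); rewrite !mulmxA -(mulmxA _ g' g) g'g mulmx1.
Qed.

Lemma lie_aut_comp (phi1 phi2 : 'M[F]_3 -> 'M[F]_3) :
  lie_aut phi1 -> lie_aut phi2 -> lie_aut (phi2 \o phi1).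
Proof.
case=> lin1 inj1 im1 br1 [lin2 inj2 im2 br2].
have sl A : A \in sl3 F -> phi1 A \in sl3 F by rewrite -{2}im1; apply: imset_f.
split.
- by move=> c A B /=; rewrite lin1 lin2.
- by move=> A B slA slB /= /inj2 -/(_ (sl _ slA) (sl _ slB)) /inj1; apply.
- by rewrite imset_comp im1 im2.
- by move=> A B slA slB /=; rewrite br1 // br2 // sl.
Qed.

Lemma conj_dec_trans (D1 D2 D3 : 'I_4 -> {set 'M[F]_3}) :
  conj_dec D1 D2 -> conj_dec D2 D3 -> conj_dec D1 D3.
Proof.
case=> phi1 [aut1 [s1 im1]] [phi2 [aut2 [s2 im2]]].
exists (phi2 \o phi1); split; first exact: lie_aut_comp.
by exists (s2 \o s1) => i; rewrite imset_comp im1 im2.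
Qed.

Section LinearMap.
Variable phi : 'M[F]_3 -> 'M[F]_3.
Hypothesis phi_lin : forall c A B, phi (c *: A + B) = c *: phi A + phi B.

Lemma linear_map0 : phi 0 = 0.
Proof.
by apply: (@addrI _ (phi 0)); rewrite -{1}(scale1r (phi 0)) -phi_lin scale1r !addr0.
Qed.

Lemma linear_mapZ c A : phi (c *: A) = c *: phi A.
Proof. by rewrite -[c *: A]addr0 phi_lin linear_map0 addr0. Qed.

Lemma linear_mapD A B : phi (A + B) = phi A + phi B.
Proof. by have := phi_lin 1 A B; rewrite !scale1r. Qed.

Lemma linear_mapB A B : phi (A - B) = phi A - phi B.
Proof. by rewrite linear_mapD -scaleN1r linear_mapZ scaleN1r. Qed.

Lemma imset_span2 A B A' B' (al be : F) :
  phi A = al *: A' -> phi B = be *: B' -> al != 0 -> be != 0 ->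
  phi @: span2 A B = span2 A' B'.
Proof.
move=> phiA phiB al0 be0; apply/setP => M; apply/imsetP/imset2P.
  case=> N /imset2P[x y _ _ ->] ->; exists (x * al) (y * be) => //.
  by rewrite linear_mapD !linear_mapZ phiA phiB !scalerA.
case=> x y _ _ ->; exists ((x / al) *: A + (y / be) *: B).
  by apply/imset2P; exists (x / al) (y / be).
by rewrite linear_mapD !linear_mapZ phiA phiB !scalerA !mulfVK.
Qed.

End LinearMap.

Lemma span2C (A B : 'M[F]_3) : span2 A B = span2 B A.
Proof.
apply/setP => M; apply/imset2P/imset2P => -[x y _ _ ->]; exists y x => //.
  all: by rewrite addrC.
Qed.

End LieAutomorphisms.

Section ConjugateDecompositions.
Variable F : finFieldType.

Lemma mem_H0 a b c d e f g h k : (mx3 a b c d e f g h k \in H0 F) =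
  [&& b == 0, c == 0, d == 0, f == 0, g == 0 & h == 0] && (a + e + k == 0).
Proof. by rewrite inE mx3_diag mx3_trace. Qed.

Lemma mem_H0_diag (M : 'M[F]_3) : M \in H0 F ->
  exists a e k, M = mx3 a 0 0 0 e 0 0 0 k /\ a + e + k = 0.
Proof.
rewrite [M]mx3E mem_H0.
case/andP => /and5P[/eqP-> /eqP-> /eqP-> /eqP-> /andP[/eqP-> /eqP->]] /eqP tr.
by do 3 eexists; split; first reflexivity.
Qed.

Lemma conj_dec_J3 (u a b a' b' : F) (phi : 'M[F]_3 -> 'M[F]_3) : lie_aut phi ->
  phi @: H0 F = H0 F -> (forall l m, phi @: Hj a b l m = Hj a' b' l m) ->
  conj_dec (J3 u a b) (J3 u a' b').
Proof.
move=> aut_phi phiH0 phiHj; exists phi; split => //; exists id.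
by case=> [[|[|[|[|i]]]] ?]; rewrite /J3 /=.
Qed.

Lemma J3_diag_conj (u a b d2 d3 : F) : d2 != 0 -> d3 != 0 ->
  conj_dec (J3 u a b) (J3 u (a * d2 ^+ 2 / d3) (b * d3 ^+ 2 / d2)).
Proof.
move=> d2_neq0 d3_neq0.
pose g := mx3 1 0 0 0 d2 0 0 0 d3; pose g' := mx3 1 0 0 0 d2^-1 0 0 0 d3^-1.
have aut_g : lie_aut (mxconj g g').
  by apply: mxconj_lie_aut; rewrite mx3_1; mx3_simpl; field; rewrite ?d2_neq0 ?d3_neq0.
have [lin _ _ _] := aut_g; apply: conj_dec_J3 aut_g _ _.
  rewrite -[RHS]imset_id; apply: eq_in_imset => M /mem_H0_diag[a0 [e0 [k0 [-> _]]]].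
  by rewrite /mxconj; mx3_simpl; field; rewrite ?d2_neq0 ?d3_neq0.
move=> l m; apply: (imset_span2 lin (_ : _ = d2^-1 *: _) (_ : _ = d3^-1 *: _));
  rewrite ?invr_eq0 // /mxconj; mx3_simpl; by field; rewrite ?d2_neq0 ?d3_neq0.
Qed.

Lemma J3_swap_conj (u a b : F) : conj_dec (J3 u a b) (J3 u b a).
Proof.
pose g := mx3 (1 : F) 0 0 0 0 1 0 1 0.
have gg : g *m g = 1%:M by rewrite mx3_1; mx3_simpl; ring.
have aut_g : lie_aut (mxconj g g) by apply: mxconj_lie_aut.
have gK : involutive (mxconj g g).
  by move=> M; rewrite /mxconj !mulmxA gg mul1mx -mulmxA gg mulmx1.
have [lin _ _ _] := aut_g; apply: conj_dec_J3 aut_g _ _.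
  have gH0 M : M \in H0 F -> mxconj g g M \in H0 F.
    case/mem_H0_diag=> [a0 [e0 [k0 [-> tr0]]]].
    rewrite /mxconj !mx3_mul mem_H0 !(mul0r, mulr0, mul1r, mulr1, addr0, add0r) !eqxx /=.
    by apply/eqP; rewrite -tr0; ring.
  apply/setP => M; apply/imsetP/idP => [[N /gH0 ? ->] //|H0M].
  by exists (mxconj g g M); rewrite ?gK ?gH0.
move=> l m; rewrite /Hj [RHS]span2C.
by apply: (imset_span2 lin (_ : _ = 1 *: _) (_ : _ = 1 *: _)); rewrite ?oner_eq0 // /mxconj;
  mx3_simpl; ring.
Qed.

End ConjugateDecompositions.

Section NonCube.
Variables (F : finFieldType) (z : F).
Hypothesis z_noncube : ~ exists w : F, w ^+ 3 = z.

Lemma noncube_neq0 : z != 0.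
Proof. by apply/eqP => z0; apply: z_noncube; exists 0; rewrite expr0n z0. Qed.

Lemma horner_mx_noncube_unit n (X : 'M[F]_n.+1) (f : {poly F}) :
  X ^+ 3 = z%:M -> f != 0 -> (size f <= 3)%N -> horner_mx X f \in unitmx.
Proof.
move=> X3 f_neq0 f_small; pose p : {poly F} := 'X^3 - z%:P.
have size_p : size p = 4 by rewrite size_XnsubC.
have p_irr : irreducible_poly p.
  apply: cubic_irreducible => [|x]; first by rewrite size_p.
  by rewrite /root !hornerE subr_eq0; apply/negP => /eqP x3; apply: z_noncube; exists x.
have /Bezout_coprimepP[[v w] /= vw1] : coprimep p f.
  rewrite irreducible_poly_coprime //; apply/negP => /(dvdp_leq f_neq0).
  by rewrite size_p => /leq_trans/(_ f_small).
have /size_poly1P[c c_neq0 vwc] : size (v * p + w * f) == 1%N.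
  by rewrite (eqp_size vw1) size_poly1.
have pX0 : horner_mx X p = 0.
  by rewrite rmorphB /= rmorphXn /= horner_mx_X horner_mx_C X3 subrr.
have wf : (c^-1 *: horner_mx X w) *m horner_mx X f = 1%:M.
  move: (congr1 (horner_mx X) vwc); rewrite rmorphD !rmorphM /= pX0 mulr0 add0r horner_mx_C.
  by move=> wf; rewrite -scalemxAl -[_ *m _]/(_ * _) wf scale_scalar_mx mulVf.
by case: (mulmx1_unit wf).
Qed.

Let X := mx3 0 1 0 0 0 1 z 0 0.

Lemma twisted_ad_fixed_eq0 (P : 'M[F]_3) (x y w : F) :
  X *m P = w *: (P *m X) -> lie (x *: X + y *: X ^+ 2) P = P -> P = 0.
Proof.
move=> XP; rewrite (lie_twisted _ _ XP) => fixP.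
pose f : {poly F} := (x * (w - 1)) *: 'X + (y * (w ^+ 2 - 1)) *: 'X^2 - 1.
have X3 : X ^+ 3 = z%:M.
  by rewrite -scalemx1 mx3_1 !exprS expr0 mulr1 -!mulmxE /X; mx3_simpl; ring.
have f_neq0 : f != 0.
  apply: contraTneq isT => f0; have := congr1 (fun p : {poly F} => p`_0) f0.
  by rewrite /f !coefE /= !(mulr0, addr0, add0r, oppr0) => /eqP; rewrite oppr_eq0 oner_eq0.
have f_small : (size f <= 3)%N.
  apply/leq_sizeP => -[|[|[|j]]] //= _.
  by rewrite /f !coefE /= !(mulr0, addr0, oppr0).
have fX : horner_mx X f = (x * (w - 1)) *: X + (y * (w ^+ 2 - 1)) *: X ^+ 2 - 1%:M.
  by rewrite /f rmorphB rmorphD /= !horner_mxZ rmorphXn /= horner_mx_X rmorph1.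
have := horner_mx_noncube_unit X3 f_neq0 f_small; rewrite fX => unit_fX.
by rewrite -[P](mulmxK unit_fX) mulmxBr mulmx1 fixP subrr mul0mx.
Qed.

Let Xi := mx3 0 0 z^-1 1 0 0 0 1 0.

Lemma mulmx_X_Xi : X *m Xi = 1%:M.
Proof. by rewrite mx3_1 /X /Xi; mx3_simpl; field; rewrite ?noncube_neq0. Qed.

Lemma mulmx_Xi_X : Xi *m X = 1%:M.
Proof. by rewrite mx3_1 /X /Xi; mx3_simpl; field; rewrite ?noncube_neq0. Qed.

Lemma conj_X_cube (M : 'M[F]_3) : X *m (X *m (X *m M *m Xi) *m Xi) *m Xi = M.
Proof.
have X3 : X *m X *m X = z%:M by rewrite -scalemx1 mx3_1 /X; mx3_simpl; ring.
have Xi3 : Xi *m Xi *m Xi = z^-1%:M.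
  by rewrite -scalemx1 mx3_1 /Xi; mx3_simpl; field; rewrite ?noncube_neq0.
rewrite (_ : _ *m Xi = X *m X *m X *m M *m (Xi *m Xi *m Xi)); last by rewrite !mulmxA.
by rewrite X3 Xi3 mul_scalar_mx mul_mx_scalar scalerA mulVf ?noncube_neq0 ?scale1r.
Qed.

Lemma mem_Hj_noncube (H : 'M[F]_3) : H \in Hj 1 z 1 1 -> exists x y, H = x *: X + y *: X ^+ 2.
Proof.
case/imset2P => x y _ _ ->; exists x, y; rewrite expr2 -mulmxE /X mx3_mul.
by congr (_ *: _ + _ *: _); congr mx3; ring.
Qed.

Lemma Hj_noncube_ad_fixed_eq0 (u : F) (H C : 'M[F]_3) :
  3.-primitive_root u -> 3%:R != 0 :> F ->
  H \in Hj 1 z 1 1 -> lie H C = C -> C = 0.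
Proof.
move=> u_prim three_neq0 /mem_Hj_noncube[x [y ->]]; set h := _ + _ => fixC.
have z_neq0 := noncube_neq0.
have hX : X *m h = h *m X by rewrite /h expr2 -mulmxE /X; mx3_simpl; ring.
have hXi : Xi *m h = h *m Xi by rewrite /h expr2 -mulmxE /X /Xi; mx3_simpl; field.
pose T : {linear 'M[F]_3 -> 'M[F]_3} := mulmxr Xi \o mulmx X.
have T3 M : T (T (T M)) = M := conj_X_cube M.
have fixT M : lie h M = M -> lie h (T M) = T M.
  by move=> fixM; rewrite /= (lie_mxconj _ hX hXi) fixM.
have fixP w : lie h (cube_eigencomp T w C) = cube_eigencomp T w C.
  by rewrite /cube_eigencomp !lieDr !lieZr fixC (fixT _ fixC) (fixT _ (fixT _ fixC)).
have P0 w : w ^+ 3 = 1 -> cube_eigencomp T w C = 0.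
  move=> w3; apply: (twisted_ad_fixed_eq0 (w := w)) (fixP w).
  have := cube_eigencompE T3 C w3; rewrite /= => /(congr1 (mulmxr X)) /=.
  by rewrite -mulmxA mulmx_Xi_X mulmx1 scalemxAl.
have u3 := prim_expr_order u_prim.
have u23 : (u ^+ 2) ^+ 3 = 1 by rewrite -exprM mulnC exprM u3 expr1n.
have := sum_cube_eigencomp T C u_prim.
rewrite P0 ?expr1n // P0 // P0 // !addr0 => /esym/eqP.
by rewrite scaler_eq0 (negPf three_neq0) => /eqP.
Qed.

Lemma noncube_cube_coset (w : F) : w != 0 ->
  exists2 j, (j < 3)%N & exists v, w * z ^+ j = v ^+ 3.
Proof.
move=> w_neq0; have [g g_prim] := finField_prim_root F.
have [[e _] /= ze] := prim_rootP g_prim (expf_card_pred noncube_neq0).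
have [[i _] /= wi] := prim_rootP g_prim (expf_card_pred w_neq0).
have e_mod : ~~ (3 %| e)%N.
  by apply/negP => /divnK e3; apply: z_noncube; exists (g ^+ (e %/ 3)); rewrite -exprM e3.
have [j j_lt3 ij_mod] := mod3_solve i e_mod.
exists j => //; exists (g ^+ ((i + e * j) %/ 3)).
by rewrite -exprM divnK // wi ze -exprM -exprD.
Qed.
End NonCube.

Section AdEigenvalueOne.
Variable F : finFieldType.

Definition has_ad_eigenvalue1 (H : {set 'M[F]_3}) :=
  exists h C, [/\ h \in H, C \in sl3 F, C != 0 & lie h C = C].

Lemma Hj_sub_sl3 a b l m : Hj a b l m \subset sl3 F.
Proof.
apply/subsetP => M /imset2P[x y _ _ ->].
by rewrite inE !mx3_scale mx3_add mx3_trace; apply/eqP; ring.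
Qed.

Lemma lie_aut_ad_eigenvalue1 (phi : 'M[F]_3 -> 'M[F]_3) (H : {set 'M[F]_3}) :
  lie_aut phi -> H \subset sl3 F -> has_ad_eigenvalue1 (phi @: H) -> has_ad_eigenvalue1 H.
Proof.
case=> lin inj im br H_sl [_ [phiC [/imsetP[h h_in ->]]]].
rewrite -{1}im => /imsetP[C C_sl ->] phiC_neq0 fix_phiC.
have h_sl : h \in sl3 F by apply: (subsetP H_sl).
have sl_sub A B : A \in sl3 F -> B \in sl3 F -> A - B \in sl3 F.
  by rewrite !inE raddfB /= => /eqP-> /eqP->; rewrite subrr.
have lie_sl : lie h C \in sl3 F by rewrite inE raddfB /= mxtrace_mulC subrr.
exists h, C; split => //; first by apply: contra phiC_neq0 => /eqP->; rewrite linear_map0.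
apply/eqP; rewrite -subr_eq0; apply/eqP/inj.
- exact: sl_sub.
- by rewrite inE raddf0.
- by rewrite linear_mapB // br // fix_phiC subrr linear_map0.
Qed.

Lemma H0_ad_eigenvalue1 : has_ad_eigenvalue1 (H0 F).
Proof.
exists (mx3 1 0 0 0 0 0 0 0 (-1)), (mx3 0 1 0 0 0 0 0 0 0); split.
- by rewrite mem_H0 !eqxx /= addr0 subrr.
- by rewrite inE mx3_trace !addr0.
- apply/eqP => /matrixP /(_ ord0 (@Ordinal 3 1 isT)); rewrite !mxE /= => /eqP.
  by rewrite oner_eq0.
- by rewrite /lie; mx3_simpl; ring.
Qed.

Lemma Hj_split_ad_eigenvalue1 (u l m : F) : 3.-primitive_root u -> l * m = 1 ->
  has_ad_eigenvalue1 (Hj 1 1 l m).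
Proof.
move=> u_prim lm1; have u3 := prim_expr_order u_prim.
have u_neq1 : u - 1 != 0 by rewrite subr_eq0 -(expr1 u) -(prim_order_dvd u_prim).
pose X := mx3 0 1 0 0 0 (l * 1) (m * 1 * 1) 0 0.
pose C := mx3 1 1 l u u (u * l) (u ^+ 2 * m) (u ^+ 2 * m) (u ^+ 2).
exists ((u - 1)^-1 *: X), C; split.
- by apply/imset2P; exists (u - 1)^-1 0 => //; rewrite scale0r addr0.
- by rewrite inE mx3_trace (prim_root3_sum u_prim).
- exact: mx3_neq0 (oner_neq0 _).
- have XC : lie X C = (u - 1) *: C by rewrite /lie /X /C; mx3_simpl; ring: u3 lm1.
  rewrite /lie -scalemxAl -scalemxAr -scalerBr -[X *m C - C *m X]/(lie X C) XC.
  by rewrite scalerA mulVf ?scale1r.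
Qed.

Lemma J3_split_ad_eigenvalue1 (u : F) (i : 'I_4) : 3.-primitive_root u ->
  has_ad_eigenvalue1 (J3 u 1 1 i).
Proof.
move=> u_prim; have u3 := prim_expr_order u_prim.
case: i => [[|[|[|[|i]]]] ?] //; rewrite /J3 /=.
- exact: H0_ad_eigenvalue1.
- by apply: (Hj_split_ad_eigenvalue1 u_prim); rewrite mulr1.
- by apply: (Hj_split_ad_eigenvalue1 u_prim); rewrite -exprS.
- by apply: (Hj_split_ad_eigenvalue1 u_prim); rewrite mulrC -exprS.
Qed.

Lemma J3_noncube_not_conj (u z : F) : 3.-primitive_root u -> 3%:R != 0 :> F ->
  ~ (exists w : F, w ^+ 3 = z) -> ~ conj_dec (J3 u 1 z) (J3 u 1 1).
Proof.
move=> u_prim three_neq0 z_noncube [phi [aut_phi [sigma im]]].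
pose i1 : 'I_4 := @Ordinal 4 1 isT.
have phiH1 : phi @: Hj 1 z 1 1 = J3 u 1 1 (sigma i1) := im i1.
have [h [C [h_in _ C_neq0 fixC]]] : has_ad_eigenvalue1 (Hj 1 z 1 1).
  apply: lie_aut_ad_eigenvalue1 aut_phi (Hj_sub_sl3 _ _ _ _) _.
  by rewrite phiH1; apply: J3_split_ad_eigenvalue1.
by move: C_neq0; rewrite (Hj_noncube_ad_fixed_eq0 z_noncube u_prim three_neq0 h_in fixC) eqxx.
Qed.

End AdEigenvalueOne.

Section NormalForm.
Variable F : finFieldType.

Lemma J3_sq_conj (u z : F) : z != 0 -> conj_dec (J3 u 1 (z ^+ 2)) (J3 u 1 z).
Proof.
move=> z_neq0; apply: conj_dec_trans (J3_swap_conj u 1 (z ^+ 2)) _.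
have := J3_diag_conj u (z ^+ 2) 1 (invr_neq0 z_neq0) (oner_neq0 F).
by congr (conj_dec _ (J3 _ _ _)); field; rewrite ?z_neq0 ?oner_neq0.
Qed.

Lemma J3_conj_normal_form (u z a b : F) : ~ (exists w : F, w ^+ 3 = z) ->
  a != 0 -> b != 0 -> exists2 j, (j < 3)%N & conj_dec (J3 u a b) (J3 u 1 (z ^+ j)).
Proof.
move=> z_noncube a_neq0 b_neq0.
have ab_neq0 : a ^+ 2 * b != 0 by rewrite mulf_neq0 ?expf_neq0.
have [j j_lt3 [v zj]] := noncube_cube_coset z_noncube (invr_neq0 ab_neq0).
have z_neq0 := noncube_neq0 z_noncube.
have v_neq0 : v != 0.
  by move: (mulf_neq0 (invr_neq0 ab_neq0) (expf_neq0 j z_neq0)); rewrite zj expf_eq0.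
exists j => //.
have := J3_diag_conj u a b v_neq0 (mulf_neq0 a_neq0 (expf_neq0 2 v_neq0)).
congr (conj_dec _ (J3 _ _ _)); first by rewrite divff // mulf_neq0 ?expf_neq0.
by rewrite -[z ^+ j](mulVKf ab_neq0) zj; field.
Qed.

End NormalForm.

Theorem theorem3p11 (F : finFieldType) (u z : F) :
  (forall p : nat, p \in [pchar F] -> (3 < p)%N) ->
  (3 %| #|F|.-1)%N ->
  3.-primitive_root u ->
  z != 0 -> ~ (exists w : F, w ^+ 3 = z) ->
  [/\ conj_dec (J3 u 1 (z ^+ 2)) (J3 u 1 z),
      ~ conj_dec (J3 u 1 z) (J3 u 1 1)
    & forall a b : F, a != 0 -> b != 0 ->
        conj_dec (J3 u a b) (J3 u 1 1) \/ conj_dec (J3 u a b) (J3 u 1 z)].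
Proof.
move=> char_gt3 _ u_prim z_neq0 z_noncube.
have three_neq0 : 3%:R != 0 :> F.
  by apply/negP => three0; have := char_gt3 3%N; rewrite inE /= three0 => /(_ isT).
have z_sq := J3_sq_conj u z_neq0.
split => //; first exact: J3_noncube_not_conj.
move=> a b a_neq0 b_neq0.
have [[|[|[|j]]] // _ conj_ab] := J3_conj_normal_form u z_noncube a_neq0 b_neq0.
- by left.
- by right.
- by right; apply: conj_dec_trans conj_ab z_sq.
Qed.
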